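(* Let $T\in M_n(\mathbb C)$ be a nilpotent matrix such that $\|T\|=\|T^{n-1}\|=1$. Then $T$ is unitarily similar to $S$, i.e. there is a unitary $U$ with $T=USU^*$.
   Context: $S$ denotes the $n\times n$ nilpotent Jordan block with ones on the superdiagonal and zeros elsewhere. $\|\cdot\|$ is the operator norm on $M_n(\mathbb C)$ induced by the Euclidean norm on $\mathbb C^n$. *)

(* Complex scalars: an arbitrary numClosedFieldType C
   (algebraically closed field with conjugation and order, e.g. algC). *)
From HB Require Import structures.
From mathcomp Require Import all_boot all_order all_algebra.
Set Implicit Arguments. Unset Strict Implicit. Unset Printing Implicit Defensive.
Import Order.TTheory GRing.Theory Num.Theory.
Local Open Scope ring_scope.

Definition vnorm (C : numClosedFieldType) (n : nat) (x : 'cV[C]_n) : C :=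
  sqrtC (\sum_(i < n) `|x i 0| ^+ 2).

Definition is_opnorm (C : numClosedFieldType) (n : nat) (A : 'M[C]_n) (c : C) : Prop :=
  (forall x : 'cV[C]_n, vnorm x = 1 -> vnorm (A *m x) <= c) /\
  (forall d : C, (forall x : 'cV[C]_n, vnorm x = 1 -> vnorm (A *m x) <= d) -> c <= d).

Definition adjmx (C : numClosedFieldType) (n : nat) (A : 'M[C]_n) : 'M[C]_n :=
  (map_mx Num.conj A)^T.

Definition unitary (C : numClosedFieldType) (n : nat) (U : 'M[C]_n) : Prop :=
  U *m adjmx U = 1%:M /\ adjmx U *m U = 1%:M.

Definition shiftmx (C : numClosedFieldType) (n : nat) : 'M[C]_n :=
  \matrix_(i < n, j < n) (((i : nat).+1 == (j : nat))%N)%:R.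

Definition nilpotent (C : numClosedFieldType) (n : nat) (A : 'M[C]_n) : Prop :=
  exists k : nat, A ^+ k = 0.

From HB Require Import structures.
From mathcomp Require Import all_boot all_order all_algebra.
From mathcomp Require Import zify.
Set Implicit Arguments. Unset Strict Implicit. Unset Printing Implicit Defensive.
Import Order.TTheory GRing.Theory Num.Theory.
Local Open Scope ring_scope.
Local Open Scope sesquilinear_scope.

(* Work with row vectors and M := T^T, so that ||T|| = 1 says that u |-> u M
   is a contraction.  Since T is nilpotent with T^(n-1) <> 0, the matrix
   M^(n-1) has rank one, so its norm is attained at some unit vector x, and
   ||M^(n-1)|| = 1 forces |x M^k| = 1 for all k < n.  A contraction that
   preserves the norm of a vector y fixes it under M M^*, which lets the
   inner products <x M^i, x M^j> be shifted to <x M^(i+1), x M^(j+1)>, and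
   eventually to an inner product with x M^n = 0.  Hence x, x M, ..., x M^(n-1)
   is an orthonormal basis on which M acts as the transposed shift. *)

Local Notation "''[' u , v ]" := (dotmx u v) : ring_scope.
Local Notation "''[' u ]" := (dotmx u u) : ring_scope.

Section NilpotentRank.
Variables (F : fieldType) (n : nat) (M : 'M[F]_n).

Lemma mxrank_exprS_le k : (\rank (M ^+ k.+1) <= \rank (M ^+ k))%N.
Proof. by rewrite exprS -mulmxE mxrankM_maxr. Qed.

Lemma mxrank_exprS_stable k : \rank (M ^+ k.+1) = \rank (M ^+ k) ->
  forall j, \rank (M ^+ (k + j)) = \rank (M ^+ k).
Proof.
move=> rkS; have sub : (M ^+ k.+1 <= M ^+ k)%MS by rewrite exprS -mulmxE submxMl.
have /eqmxP eqS : (M ^+ k.+1 == M ^+ k)%MS by rewrite -(mxrank_leqif_eq sub).2 rkS.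
elim=> [|j IH]; first by rewrite addn0.
by rewrite -IH addnS -addSn !exprD -!mulmxE (eqmxMr _ eqS).
Qed.

Lemma mxrank_nilpotent_exprn k0 : M ^+ k0 = 0 -> forall k, (\rank (M ^+ k) <= n - k)%N.
Proof.
move=> Mk0; elim=> [|k IH]; first by rewrite subn0 rank_leq_row.
have [Mk|Mk] := eqVneq (M ^+ k) 0.
  by rewrite exprS -mulmxE Mk mulmx0 mxrank0.
have : (\rank (M ^+ k.+1) < \rank (M ^+ k))%N.
  rewrite ltn_neqAle mxrank_exprS_le andbT; apply: contra_neq Mk => rkS.
  have := mxrank_exprS_stable rkS k0.
  by rewrite exprD Mk0 mulr0 mxrank0 => /esym/eqP; rewrite mxrank_eq0 => /eqP.
lia.
Qed.

Lemma nilpotent_exprn k0 : M ^+ k0 = 0 -> M ^+ n = 0.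
Proof.
move=> Mk0; apply/eqP; rewrite -mxrank_eq0 -leqn0 -(subnn n).
exact: mxrank_nilpotent_exprn Mk0 n.
Qed.

Lemma nilpotent_mxrank_exprn_pred k0 : M ^+ k0 = 0 -> M ^+ n.-1 != 0 ->
  \rank (M ^+ n.-1) = 1%N.
Proof.
move=> Mk0; rewrite -mxrank_eq0 => nz.
by have := mxrank_nilpotent_exprn Mk0 n.-1; lia.
Qed.

End NilpotentRank.

Lemma trmxX (R : comPzRingType) n (A : 'M[R]_n) k : (A ^+ k)^T = A^T ^+ k.
Proof.
elim: k => [|k IH]; first by rewrite !expr0 trmx1.
by rewrite exprS exprSr -!mulmxE trmx_mul IH.
Qed.

Lemma mulmx_exprS (R : pzRingType) m n (A : 'M[R]_(m, n)) (M : 'M[R]_n) k :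
  A *m M ^+ k *m M = A *m M ^+ k.+1.
Proof. by rewrite exprSr -mulmxE mulmxA. Qed.

Section DotProduct.
Variables (C : numClosedFieldType) (n : nat).
Implicit Types (u w : 'rV[C]_n) (A : 'M[C]_n).

Lemma dotmxC u w : '[u, w] = '[w, u]^*.
Proof. by rewrite hermC /= expr0 mul1r. Qed.

Lemma dotmx_mulmxl u w A : '[u *m A, w] = '[u, w *m A^t*].
Proof. by rewrite !dotmxE trmx_mul map_mxM trmxCK mulmxA. Qed.

Lemma dnorm_real u : '[u]^* = '[u].
Proof. by apply/CrealP; rewrite realE dnorm_ge0. Qed.

Lemma mxrank1_dnorm_max A : \rank A = 1%N ->
  exists2 x, '[x] = 1 & forall u, '[u *m A] <= '[u] * '[x *m A].
Proof.
move=> rkA; have [w [r wr]] : exists (w : 'cV_n) (r : 'rV_n), w *m r = A.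
  move: (col_base A) (row_base A) (mulmx_base A); rewrite rkA => w r wr.
  by exists w, r.
have uA u : u *m A = '[u, w^t*] *: r.
  by rewrite -wr mulmxA [u *m w]mx11_scalar mul_scalar_mx dotmxE trmxCK.
have w_neq0 : w^t* != 0.
  apply/eqP => /(congr1 (fun v => v^t*)); rewrite trmxCK => w0.
  by move: rkA; rewrite -wr w0 trmx0 map_mx0 mul0mx mxrank0.
set v := w^t* in uA w_neq0; have v_gt0 : 0 < '[v] by rewrite dnorm_gt0.
exists ((sqrtC '[v])^-1 *: v).
  rewrite dnormZ normfV ger0_norm ?sqrtC_ge0 ?dnorm_ge0 //.
  by rewrite exprVn sqrtCK mulVf ?gt_eqF.
move=> u; rewrite !uA !dnormZ linearZl_LR /= normrM normfV.
rewrite [`|sqrtC _|]ger0_norm ?sqrtC_ge0 ?dnorm_ge0 // [`|'[v]|]ger0_norm ?dnorm_ge0 //.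
rewrite exprMn exprVn sqrtCK (expr2 '[v]) mulKf ?gt_eqF //.
rewrite mulrA; apply: ler_wpM2r; first exact: dnorm_ge0.
exact: (CauchySchwarz (@dotmx C n) u v).1.
Qed.

End DotProduct.

Section Contraction.
Variables (C : numClosedFieldType) (n : nat) (M : 'M[C]_n).
Hypothesis M_contr : forall u : 'rV_n, '[u *m M] <= '[u].

Lemma contraction_exprn_le (u : 'rV_n) i j :
  (i <= j)%N -> '[u *m M ^+ j] <= '[u *m M ^+ i].
Proof.
move=> /subnKC <-; elim: (j - i)%N => [|d IH]; first by rewrite addn0.
by rewrite addnS -mulmx_exprS (le_trans (M_contr _)).
Qed.

Lemma contraction_adj (u : 'rV_n) : '[u *m M^t*] <= '[u].
Proof.
set a := '[u *m M^t*]; have a_ge0 : 0 <= a := dnorm_ge0 _ _.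
have [->|a_neq0] := eqVneq a 0; first exact: dnorm_ge0.
have a_gt0 : 0 < a by rewrite lt_def a_neq0.
rewrite -(ler_pM2r a_gt0).
have -> : a * a = `|'[u, u *m M^t* *m M]| ^+ 2.
  by rewrite -{2}[M]trmxCK -dotmx_mulmxl ger0_norm ?expr2.
apply: le_trans (CauchySchwarz (@dotmx C n) _ _).1 _.
by apply: ler_wpM2l; [exact: dnorm_ge0 | exact: M_contr].
Qed.

Lemma contraction_fixed (y : 'rV_n) : '[y *m M] = '[y] -> y *m (M *m M^t*) = y.
Proof.
move=> Mpres; apply/eqP; rewrite -subr_eq0 -(dnorm_eq0 (@dotmx C n)).
rewrite eq_le dnorm_ge0 andbT dnormB /=.
(* |y M M^* - y|^2 = |y M M^*|^2 - 2 |y M|^2 + |y|^2 <= |y|^2 - |y M|^2 = 0 *)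
have -> : '[y *m (M *m M^t*), y] = '[y *m M] by rewrite mulmxA dotmx_mulmxl trmxCK.
by rewrite dnorm_real -Mpres mulmxA subr_le0 lerD2r contraction_adj.
Qed.

End Contraction.

Section Orbit.
Variables (C : numClosedFieldType) (m : nat) (M : 'M[C]_m.+1) (x : 'rV[C]_m.+1).

Definition orbit_mx : 'M[C]_m.+1 := \matrix_(i < m.+1) (x *m M ^+ (m - i)).

Hypothesis M_nil : M ^+ m.+1 = 0.

Lemma orbit_mx_shift : orbit_mx *m M = (shiftmx C m.+1)^T *m orbit_mx.
Proof.
apply/row_matrixP => i; rewrite !row_mul rowK mulmx_exprS [RHS]mulmx_sum_row.
case: i => [[|i] lt_im] /=.
  rewrite subn0 M_nil mulmx0 big1 // => k _.
  by rewrite !mxE /= scale0r.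
have lt_i : (i < m.+1)%N by lia.
rewrite (bigD1 (Ordinal lt_i)) //= big1 => [|k ne_ki]; last first.
  rewrite !mxE /=; case: eqP => [ki|]; last by rewrite scale0r.
  by case/eqP: ne_ki; apply/val_inj => /=; lia.
rewrite !mxE eqxx scale1r addr0 rowK /=.
by congr (_ *m M ^+ _); lia.
Qed.

Hypotheses (M_contr : forall u : 'rV_m.+1, '[u *m M] <= '[u])
           (x_unit : '[x] = 1) (xMm_ge1 : 1 <= '[x *m M ^+ m]).

Lemma dnorm_orbit k : (k <= m)%N -> '[x *m M ^+ k] = 1.
Proof.
move=> le_km; apply/eqP; rewrite eq_le; apply/andP; split.
  by have := contraction_exprn_le M_contr x (leq0n k); rewrite expr0 mulmx1 x_unit.
exact: le_trans xMm_ge1 (contraction_exprn_le M_contr _ le_km).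
Qed.

Lemma dotmx_orbit_shift i j : (i < m)%N ->
  '[x *m M ^+ i, x *m M ^+ j] = '[x *m M ^+ i.+1, x *m M ^+ j.+1].
Proof.
move=> lt_im; have fix_i : x *m M ^+ i *m (M *m M^t*) = x *m M ^+ i.
  by apply: contraction_fixed => //; rewrite mulmx_exprS !dnorm_orbit // ltnW.
by rewrite -{1}fix_i mulmxA dotmx_mulmxl trmxCK !mulmx_exprS.
Qed.

Lemma orbit_orthonormal i j : (i <= m)%N -> (j <= m)%N ->
  '[x *m M ^+ i, x *m M ^+ j] = (i == j)%:R.
Proof.
have orth d i' j' : (i' < j')%N -> (j' + d)%N = m.+1 ->
    '[x *m M ^+ i', x *m M ^+ j'] = 0.
  elim: d i' j' => [|d IH] i' j' lt_ij def_m.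
    by rewrite addn0 in def_m; rewrite def_m M_nil mulmx0 linear0r.
  rewrite dotmx_orbit_shift; last lia.
  by apply: IH; lia.
move=> le_im le_jm; case: ltngtP => [lt_ij|lt_ji|<-].
- by apply: (orth (m.+1 - j)%N); lia.
- by rewrite dotmxC (orth (m.+1 - i)%N) ?conjC0 //; lia.
- exact: dnorm_orbit.
Qed.

Lemma orbit_mx_unitary : orbit_mx \is unitarymx.
Proof.
apply/row_unitarymxP => i j; rewrite !rowK orbit_orthonormal ?leq_subr //.
suff -> : (m - i == m - j)%N = (i == j) by [].
apply/eqP/eqP => [eq_ij|-> //].
by apply: ord_inj; have := ltn_ord i; have := ltn_ord j; lia.
Qed.

End Orbit.

Section OperatorNorm.
Variables (C : numClosedFieldType) (n : nat).

Lemma vnormE (x : 'cV[C]_n) : vnorm x = sqrtC '[x^T].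
Proof.
rewrite /vnorm dotmxE mxE; congr sqrtC; apply: eq_bigr => i _.
by rewrite !mxE normCK.
Qed.

Lemma opnorm1_contraction (A : 'M[C]_n) :
  is_opnorm A 1 -> forall u : 'rV_n, '[u *m A^T] <= '[u].
Proof.
move=> [A_le1 _] u; have [->|u_neq0] := eqVneq u 0; first by rewrite mul0mx.
have u_gt0 : 0 < '[u] by rewrite dnorm_gt0.
set c := (sqrtC '[u])^-1.
have c2 : `|c| ^+ 2 = '[u]^-1.
  by rewrite normfV ger0_norm ?sqrtC_ge0 ?dnorm_ge0 // exprVn sqrtCK.
have := A_le1 (c *: u)^T; rewrite !vnormE trmx_mul !trmxK -scalemxAl !dnormZ c2.
rewrite mulVf ?gt_eqF // sqrtC1 => /(_ erefl).
rewrite -sqrtC1 ler_sqrtC ?nnegrE ?mulr_ge0 ?invr_ge0 ?dnorm_ge0 //.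
by rewrite ler_pdivrMl // mulr1.
Qed.

Lemma opnorm1_ge (A : 'M[C]_n) K :
  is_opnorm A 1 -> (forall u : 'rV_n, '[u *m A^T] <= '[u] * K) -> 1 <= K.
Proof.
move=> [_ A_min] A_le; suff : 1 <= sqrtC K by move=> /(exprn_ege1 2); rewrite sqrtCK.
apply: A_min => x; rewrite !vnormE trmx_mul => /(congr1 (fun s => s ^+ 2)).
rewrite sqrtCK expr1n => x_unit; have := A_le x^T; rewrite x_unit mul1r => le_K.
by rewrite ler_sqrtC ?nnegrE ?dnorm_ge0 ?(le_trans (dnorm_ge0 _ _) le_K).
Qed.

Lemma opnorm1_neq0 (A : 'M[C]_n) : is_opnorm A 1 -> A != 0.
Proof.
move=> A_norm; apply/eqP => A0; suff : (1 : C) <= 0 by rewrite ler10.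
by apply: (opnorm1_ge A_norm) => u; rewrite A0 trmx0 mulmx0 linear0l mulr0.
Qed.

Lemma adjmxE (U : 'M[C]_n) : adjmx U = U^t*.
Proof. by rewrite /adjmx map_trmx. Qed.

Lemma unitarymx_unitary (U : 'M[C]_n) : U \is unitarymx -> unitary U.
Proof.
by move=> /unitarymxP U_unitary; rewrite /unitary adjmxE; split; last exact: mulmx1C.
Qed.

End OperatorNorm.

Theorem lemma2p1 (C : numClosedFieldType) (n : nat) (T : 'M[C]_n) :
  nilpotent T -> is_opnorm T 1 -> is_opnorm (T ^+ n.-1) 1 ->
  exists U : 'M[C]_n, unitary U /\ T = U *m shiftmx C n *m adjmx U.
Proof.
move=> [k0 Tk0] T_norm Tn_norm.
case: n T Tk0 T_norm Tn_norm => [|m] T Tk0 T_norm Tn_norm.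
  by move/opnorm1_neq0: T_norm; rewrite flatmx0 eqxx.
set M := T^T.
have M_k0 : M ^+ k0 = 0 by rewrite /M -trmxX Tk0 trmx0.
have M_nil : M ^+ m.+1 = 0 := nilpotent_exprn M_k0.
have Mm_neq0 : M ^+ m != 0 by rewrite /M -trmxX trmx_eq0 opnorm1_neq0.
have [x x_unit x_attains] :=
  mxrank1_dnorm_max (nilpotent_mxrank_exprn_pred M_k0 Mm_neq0).
have xMm_ge1 : 1 <= '[x *m M ^+ m].
  by apply: (opnorm1_ge Tn_norm) => u; rewrite trmxX x_attains.
set W := orbit_mx M x.
have W_unitary : W \is unitarymx :=
  orbit_mx_unitary M_nil (opnorm1_contraction T_norm) x_unit xMm_ge1.
have TW : T *m W^T = W^T *m shiftmx C m.+1.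
  by apply: trmx_inj; rewrite !trmx_mul !trmxK orbit_mx_shift.
exists W^T; split; first by apply: unitarymx_unitary; rewrite trmx_unitary.
by rewrite -TW adjmxE mulmxtVK ?trmx_unitary.
Qed.
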